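(* Let $t\ge 3$ and let $G_t$ be the labeling of the complete graph $K_{2t}$ in which the edges of a fixed perfect matching are labeled $-$ and all other edges are labeled $+$. Consider the linear program $\mathsf{L}$ in variables $M\in\mathbb{R}$ and $x_{uv}$ for each unordered pair $uv$ of distinct vertices: minimize $M$ subject to $x_{uv}\le x_{uz}+x_{zv}$ for all distinct $u,v,z$; $\sum_{w\in N^+(v)}x_{vw}+\sum_{w\in N^-(v)}(1-x_{vw})\le M$ for all vertices $v$; and $0\le x_{e}\le 1$ for all edges $e$. Then the unique optimal solution of $\mathsf{L}$ has $x_{uv}=0$ for all edges $uv$ of $G_t$.
   Context: $N^+(v)$ and $N^-(v)$ denote the sets of vertices joined to $v$ by a $+$ edge, resp. a $-$ edge. *)

From mathcomp Require Import all_boot all_order all_algebra.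
From mathcomp Require Import reals.
Set Implicit Arguments. Unset Strict Implicit. Unset Printing Implicit Defensive.
Import Order.TTheory GRing.Theory Num.Theory.
Local Open Scope ring_scope.

(* Vertices of K_{2t} are 'I_(2*t).  A perfect matching is given by a
   fixed-point-free involution p : v is matched to p v.  The edge uv is
   labelled - iff v = p u, and + otherwise. *)
Definition perfect_matching (n : nat) (p : 'I_n -> 'I_n) : Prop :=
  (forall v, p (p v) = v) /\ (forall v, p v != v).

Definition Nplus (n : nat) (p : 'I_n -> 'I_n) (v : 'I_n) : {set 'I_n} :=
  [set w | (w != v) && (w != p v)].
Definition Nminus (n : nat) (p : 'I_n -> 'I_n) (v : 'I_n) : {set 'I_n} :=
  [set p v].

(* Edge variables x_{uv} are indexed by unordered pairs: we represent them by
   a function x : V -> V -> R which is symmetric on distinct pairs; the values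
   x v v are meaningless and never used. *)
Definition feasibleL (R : realType) (n : nat) (p : 'I_n -> 'I_n)
    (M : R) (x : 'I_n -> 'I_n -> R) : Prop :=
  (forall u v, u != v -> x u v = x v u) /\
  (forall u v z, u != v -> v != z -> u != z -> x u v <= x u z + x z v) /\
  (forall v, \sum_(w in Nplus p v) x v w + \sum_(w in Nminus p v) (1 - x v w)
               <= M) /\
  (forall u v, u != v -> 0 <= x u v /\ x u v <= 1).

Definition optimalL (R : realType) (n : nat) (p : 'I_n -> 'I_n)
    (M : R) (x : 'I_n -> 'I_n -> R) : Prop :=
  feasibleL p M x /\ forall M' x', feasibleL p M' x' -> M <= M'.

From mathcomp Require Import all_boot all_order all_algebra.
From mathcomp Require Import reals.
From mathcomp Require Import lra zify.
Set Implicit Arguments. Unset Strict Implicit. Unset Printing Implicit Defensive.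
Import Order.TTheory GRing.Theory Num.Theory.
Local Open Scope ring_scope.

(* Let A be the total weight on + edges and B the total weight on the matching.
   For a matching edge v(p v), every other vertex z gives a path v z (p v), so
   the triangle inequality yields (n - 2) x_{v,p v} <= A_v + A_{p v}; summing,
   (n - 2) B <= 2 A.  Summing the vertex constraints gives A + n - B <= n M.
   As n - 2 >= 3, B <= 2A/3 and hence n M >= n + A/3: so M >= 1, and M = 1
   forces A = B = 0, i.e. x = 0. *)

Section MatchedLabelling.
Variables (R : realType) (n : nat) (p : 'I_n -> 'I_n).
Hypothesis p_invol : forall v, p (p v) = v.
Hypothesis p_fixfree : forall v, p v != v.

Lemma Nplus_match v : Nplus p (p v) = Nplus p v.
Proof. by apply/setP => w; rewrite !inE p_invol andbC. Qed.

Lemma card_Nplus v : #|Nplus p v| = (n - 2)%N.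
Proof.
have -> : Nplus p v = ~: [set v; p v] by apply/setP => w; rewrite !inE negb_or.
rewrite -[n in (n - 2)%N]card_ord -(cardsC [set v; p v]).
by rewrite cards2 eq_sym p_fixfree addKn.
Qed.

Definition plus_load (x : 'I_n -> 'I_n -> R) v := \sum_(w in Nplus p v) x v w.

Section Feasible.
Variables (M : R) (x : 'I_n -> 'I_n -> R).
Hypothesis feas : feasibleL p M x.

Lemma plus_edge_ge0 v w : w \in Nplus p v -> 0 <= x v w.
Proof. by case: feas => _ [_ [_ bnd]]; rewrite inE eq_sym => /andP[/bnd[]]. Qed.

Lemma plus_load_ge0 v : 0 <= plus_load x v.
Proof. exact: sumr_ge0 (@plus_edge_ge0 v). Qed.

Lemma matched_ge0 v : 0 <= x v (p v).
Proof. by case: feas => _ [_ [_ bnd]]; case: (bnd v (p v)); rewrite // eq_sym. Qed.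

Lemma matched_le_plus_loads v :
  (n - 2)%:R * x v (p v) <= plus_load x v + plus_load x (p v).
Proof.
case: feas => sym [tri _].
rewrite -(card_Nplus v) mulr_natl -sumr_const /plus_load Nplus_match -big_split.
apply: ler_sum => z; rewrite inE => /andP[zv zpv].
rewrite [x (p v) z]sym 1?eq_sym //; apply: tri; by rewrite // eq_sym.
Qed.

Lemma sum_matched_le_plus_loads :
  (n - 2)%:R * \sum_v x v (p v) <= 2%:R * \sum_v plus_load x v.
Proof.
have sum_p : \sum_v plus_load x (p v) = \sum_v plus_load x v.
  by rewrite [RHS](reindex_inj (can_inj p_invol)).
rewrite mulr_sumr mulr2n mulrDl mul1r -{2}sum_p -big_split.
apply: ler_sum => v _; exact: matched_le_plus_loads.
Qed.

Lemma sum_vertex_constraints :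
  \sum_v plus_load x v + (n%:R - \sum_v x v (p v)) <= n%:R * M.
Proof.
case: feas => _ [_ [vert _]].
have sum_const (a : R) : \sum_(v : 'I_n) a = n%:R * a.
  by rewrite sumr_const card_ord mulr_natl.
rewrite -sum_const -[n%:R]mulr1 -sum_const -sumrB -big_split.
by apply: ler_sum => v _; have := vert v; rewrite big_set1.
Qed.

Hypothesis n_ge5 : (5 <= n)%N.

Lemma sum_matched_le_two_thirds :
  3%:R * \sum_v x v (p v) <= 2%:R * \sum_v plus_load x v.
Proof.
apply: le_trans sum_matched_le_plus_loads; apply: ler_wpM2r.
  by apply: sumr_ge0 => v _; apply: matched_ge0.
by rewrite ler_nat; lia.
Qed.

Lemma feasibleL_ge1 : 1 <= M.
Proof.
have SA : 0 <= \sum_v plus_load x v by apply: sumr_ge0 => v _; apply: plus_load_ge0.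
have n_gt0 : (0 : R) < n%:R by rewrite ltr0n; lia.
rewrite -(ler_pM2l n_gt0).
by have := sum_vertex_constraints; have := sum_matched_le_two_thirds; lra.
Qed.

Lemma feasibleL1_eq0 : M <= 1 -> forall u v, u != v -> x u v = 0.
Proof.
move=> M_le1 u v uv.
have SA : 0 <= \sum_v plus_load x v by apply: sumr_ge0 => w _; apply: plus_load_ge0.
have SB : 0 <= \sum_v x v (p v) by apply: sumr_ge0 => w _; apply: matched_ge0.
have nM_le_n : n%:R * M <= n%:R * 1 by apply: ler_wpM2l.
have vert := sum_vertex_constraints.
have two_thirds := sum_matched_le_two_thirds.
have sumA0 : \sum_v plus_load x v = 0 by lra.
have sumB0 : \sum_v x v (p v) = 0 by lra.
case: (eqVneq v (p u)) => [->|vpu].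
  exact: (psumr_eq0P (fun w _ => matched_ge0 w) sumB0).
have Au0 : plus_load x u = 0.
  exact: (psumr_eq0P (fun w _ => plus_load_ge0 w) sumA0).
by apply: (psumr_eq0P (@plus_edge_ge0 u) Au0); rewrite inE eq_sym uv vpu.
Qed.

End Feasible.

Lemma feasibleL_zero : feasibleL p (1 : R) (fun _ _ => 0).
Proof.
do !split => //; first by move=> *; rewrite addr0.
by move=> v; rewrite big_set1 big1 // subr0 add0r.
Qed.

End MatchedLabelling.

Theorem proposition1 (R : realType) (t : nat) (p : 'I_(2 * t) -> 'I_(2 * t)) :
  (3 <= t)%N -> perfect_matching p ->
  exists (M : R) (x : 'I_(2 * t) -> 'I_(2 * t) -> R),
    optimalL p M x /\
    (forall u v, u != v -> x u v = 0) /\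
    (forall (M' : R) x', optimalL p M' x' ->
       M' = M /\ forall u v, u != v -> x' u v = x u v).
Proof.
move=> t_ge3 [p_invol p_fixfree].
have n_ge5 : (5 <= 2 * t)%N by lia.
have zero_feas : feasibleL p (1 : R) (fun _ _ => 0) by exact: feasibleL_zero.
have ge1 (M : R) x : feasibleL p M x -> 1 <= M.
  by move=> feas; exact: (feasibleL_ge1 p_invol p_fixfree feas n_ge5).
exists 1, (fun _ _ => 0); split; first by split=> // M' x' /ge1.
split=> // M' x' [feas' opt'].
have M'_le1 : M' <= 1 := opt' _ _ zero_feas.
split; first by apply: le_anti; rewrite M'_le1 (ge1 _ _ feas').
by move=> u v; exact: (feasibleL1_eq0 p_invol p_fixfree feas' n_ge5 M'_le1).
Qed.
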